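(* Let $R$ be a commutative ring and $\mathcal{G}$ a Gabriel filter of finite type. Let $E$ be an injective module with $\operatorname{Cogen}E=\mathcal{F}_\mathcal{G}$ (e.g. $E=\prod\{E(R/J)\mid R/J\in\mathcal{F}_\mathcal{G}\}$), and $E_1=\prod_{I\in\mathcal{G}}E(R/I)$. Then there exists an $\mathcal{F}_\mathcal{G}$-precover $\bar f:Q\to E_1$ with $Q$ injective; for any such $\bar f$, with $K=\operatorname{Ker}\bar f$, $E_0=E\oplus Q$ and $\lambda=(0\ \bar f):E_0\to E_1$, the sequence $0\to E\oplus K\to E_0\xrightarrow{\lambda}E_1$ is exact, $C_\mathcal{G}=E\oplus K$ is a cosilting module with respect to $\lambda$, and $\operatorname{Cogen}C_\mathcal{G}=\mathcal{F}_\mathcal{G}$.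
   Context: A Gabriel filter is a filter $\mathcal{G}$ of ideals such that (i) $I\in\mathcal{G}$, $x\in R$ imply $(I:x)\in\mathcal{G}$, (ii) if $J$ is an ideal and there is $I\in\mathcal{G}$ with $(J:x)\in\mathcal{G}$ for all $x\in I$ then $J\in\mathcal{G}$; of finite type if it has a filter basis of finitely generated ideals. $\mathcal{F}_\mathcal{G}=\{M\mid\operatorname{Hom}_R(R/I,M)=0\ \forall I\in\mathcal{G}\}$. $E(M)$ is the injective envelope. An $\mathcal{F}_\mathcal{G}$-precover of $X$ is a map $f:Q\to X$ with $Q\in\mathcal{F}_\mathcal{G}$ such that every map from a module in $\mathcal{F}_\mathcal{G}$ to $X$ factors through $f$. $\operatorname{Cogen}C$: submodules of products of copies of $C$. $\mathcal{C}_\lambda=\{X\mid\operatorname{Hom}_R(X,\lambda)\text{ surjective}\}$; $C$ is cosilting with respect to $\lambda:E_0\to E_1$ if $0\to C\to E_0\xrightarrow{\lambda}E_1$ is exact with $E_0,E_1$ injective and $\operatorname{Cogen}C=\mathcal{C}_\lambda$. *)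

From HB Require Import structures.
From mathcomp Require Import all_boot all_order all_algebra.
From Stdlib Require Import Classical ClassicalEpsilon FunctionalExtensionality PropExtensionality.
Set Implicit Arguments. Unset Strict Implicit. Unset Printing Implicit Defensive.
Import GRing.Theory.
Local Open Scope ring_scope.

Lemma pdec (P : Prop) : {P} + {~ P}.
Proof.
have /constructive_indefinite_description [b Hb] : exists b : bool, if b then P else ~ P.
  by case: (classic P) => H; [exists true | exists false].
by case: b Hb; [left | right].
Qed.

Definition cl_eq (T : Type) (x y : T) : bool := if pdec (x = y) then true else false.
Lemma cl_eqP (T : Type) : Equality.axiom (@cl_eq T).
Proof. by move=> x y; rewrite /cl_eq; case: pdec => H; constructor. Qed.

Definition cl_find (T : Type) (P : pred T) (n : nat) : option T :=
  match pdec (exists x, P x) with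
  | left H => Some (proj1_sig (constructive_indefinite_description _ H))
  | right _ => None end.
Lemma cl_find_correct (T : Type) (P : pred T) n x : cl_find P n = Some x -> P x.
Proof. rewrite /cl_find; case: pdec => // H [<-].
by case: (constructive_indefinite_description _ H). Qed.
Lemma cl_find_complete (T : Type) (P : pred T) : (exists x, P x) -> exists n, cl_find P n.
Proof. by move=> H; exists 0%N; rewrite /cl_find; case: pdec. Qed.
Lemma cl_find_ext (T : Type) (P Q : pred T) : P =1 Q -> cl_find P =1 cl_find Q.
Proof. by move=> /functional_extensionality ->. Qed.

Definition dprodm (R : pzRingType) (I : Type) (M : I -> lmodType R) : Type :=
  forall i, M i.


HB.instance Definition _ (R : pzRingType) (I : Type) (M : I -> lmodType R) :=
  hasDecEq.Build (dprodm M) (@cl_eqP _).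
HB.instance Definition _ (R : pzRingType) (I : Type) (M : I -> lmodType R) :=
  hasChoice.Build (dprodm M) (@cl_find_correct _) (@cl_find_complete _) (@cl_find_ext _).

Definition dp_zero R I (M : I -> lmodType R) : dprodm M := fun i => 0.
Definition dp_opp R I (M : I -> lmodType R) (x : dprodm M) : dprodm M := fun i => - x i.
Definition dp_add R I (M : I -> lmodType R) (x y : dprodm M) : dprodm M := fun i => x i + y i.
Definition dp_scale R I (M : I -> lmodType R) (a : R) (x : dprodm M) : dprodm M :=
  fun i => a *: x i.

Lemma dp_addA R I (M : I -> lmodType R) : associative (@dp_add R I M).
Proof. by move=> x y z; apply: functional_extensionality_dep => i; rewrite /dp_add addrA. Qed.
Lemma dp_addC R I (M : I -> lmodType R) : commutative (@dp_add R I M).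
Proof. by move=> x y; apply: functional_extensionality_dep => i; rewrite /dp_add addrC. Qed.
Lemma dp_add0 R I (M : I -> lmodType R) : left_id (@dp_zero R I M) (@dp_add R I M).
Proof. by move=> x; apply: functional_extensionality_dep => i; rewrite /dp_add add0r. Qed.
Lemma dp_addN R I (M : I -> lmodType R) :
  left_inverse (@dp_zero R I M) (@dp_opp R I M) (@dp_add R I M).
Proof. by move=> x; apply: functional_extensionality_dep => i; rewrite /dp_add addNr. Qed.

HB.instance Definition _ (R : pzRingType) (I : Type) (M : I -> lmodType R) :=
  GRing.isZmodule.Build (dprodm M) (@dp_addA R I M) (@dp_addC R I M) (@dp_add0 R I M) (@dp_addN R I M).

Lemma dp_scaleA R I (M : I -> lmodType R) a b (v : dprodm M) :
  dp_scale a (dp_scale b v) = dp_scale (a * b) v.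
Proof. by apply: functional_extensionality_dep => i; rewrite /dp_scale scalerA. Qed.
Lemma dp_scale1 R I (M : I -> lmodType R) : left_id 1 (@dp_scale R I M).
Proof. by move=> v; apply: functional_extensionality_dep => i; rewrite /dp_scale scale1r. Qed.
Lemma dp_scaleDr R I (M : I -> lmodType R) : right_distributive (@dp_scale R I M) +%R.
Proof. by move=> a u v; apply: functional_extensionality_dep => i; rewrite /dp_scale scalerDr. Qed.
Lemma dp_scaleDl R I (M : I -> lmodType R) (v : dprodm M) :
  {morph (@dp_scale R I M)^~ v : a b / a + b}.
Proof. by move=> a b; apply: functional_extensionality_dep => i; rewrite /dp_scale scalerDl. Qed.

HB.instance Definition _ (R : pzRingType) (I : Type) (M : I -> lmodType R) :=
  GRing.Zmodule_isLmodule.Build R (dprodm M) (@dp_scaleA R I M) (@dp_scale1 R I M)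
    (@dp_scaleDr R I M) (@dp_scaleDl R I M).


Definition kerm (R : pzRingType) (U V : lmodType R) (f : {linear U -> V}) : Type :=
  {u : U | f u == 0}.

HB.instance Definition _ (R : pzRingType) (U V : lmodType R) (f : {linear U -> V}) :=
  hasDecEq.Build (kerm f) (@cl_eqP _).
HB.instance Definition _ (R : pzRingType) (U V : lmodType R) (f : {linear U -> V}) :=
  hasChoice.Build (kerm f) (@cl_find_correct _) (@cl_find_complete _) (@cl_find_ext _).

Lemma kerm_inj (R : pzRingType) (U V : lmodType R) (f : {linear U -> V}) (x y : kerm f) :
  proj1_sig x = proj1_sig y -> x = y.
Proof.
case: x y => [x Hx] [y Hy] /= E; subst y; congr exist; exact: eq_irrelevance.
Qed.

Lemma kerm0_proof (R : pzRingType) (U V : lmodType R) (f : {linear U -> V}) : f 0 == 0.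
Proof. by rewrite linear0. Qed.
Lemma kermN_proof (R : pzRingType) (U V : lmodType R) (f : {linear U -> V}) (x : kerm f) :
  f (- proj1_sig x) == 0.
Proof. by case: x => x /eqP Hx /=; rewrite linearN Hx oppr0. Qed.
Lemma kermD_proof (R : pzRingType) (U V : lmodType R) (f : {linear U -> V}) (x y : kerm f) :
  f (proj1_sig x + proj1_sig y) == 0.
Proof. by case: x y => x /eqP Hx [y /eqP Hy] /=; rewrite linearD Hx Hy addr0. Qed.
Lemma kermZ_proof (R : pzRingType) (U V : lmodType R) (f : {linear U -> V}) a (x : kerm f) :
  f (a *: proj1_sig x) == 0.
Proof. by case: x => x /eqP Hx /=; rewrite linearZ_LR Hx scaler0. Qed.

Definition km_zero (R : pzRingType) (U V : lmodType R) (f : {linear U -> V}) : kerm f := exist (fun u => f u == 0) 0 (@kerm0_proof R U V f).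
Definition km_opp (R : pzRingType) (U V : lmodType R) (f : {linear U -> V}) (x : kerm f) : kerm f :=
  exist (fun u => f u == 0) _ (@kermN_proof R U V f x).
Definition km_add (R : pzRingType) (U V : lmodType R) (f : {linear U -> V}) (x y : kerm f) : kerm f :=
  exist (fun u => f u == 0) _ (@kermD_proof R U V f x y).
Definition km_scale (R : pzRingType) (U V : lmodType R) (f : {linear U -> V}) a (x : kerm f) : kerm f :=
  exist (fun u => f u == 0) _ (@kermZ_proof R U V f a x).

Lemma km_addA (R : pzRingType) (U V : lmodType R) (f : {linear U -> V}) : associative (@km_add R U V f).
Proof. by move=> x y z; apply: kerm_inj; rewrite /= addrA. Qed.
Lemma km_addC (R : pzRingType) (U V : lmodType R) (f : {linear U -> V}) : commutative (@km_add R U V f).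
Proof. by move=> x y; apply: kerm_inj; rewrite /= addrC. Qed.
Lemma km_add0 (R : pzRingType) (U V : lmodType R) (f : {linear U -> V}) : left_id (@km_zero R U V f) (@km_add R U V f).
Proof. by move=> x; apply: kerm_inj; rewrite /= add0r. Qed.
Lemma km_addN (R : pzRingType) (U V : lmodType R) (f : {linear U -> V}) :
  left_inverse (@km_zero R U V f) (@km_opp R U V f) (@km_add R U V f).
Proof. by move=> x; apply: kerm_inj; rewrite /= addNr. Qed.

HB.instance Definition _ (R : pzRingType) (U V : lmodType R) (f : {linear U -> V}) :=
  GRing.isZmodule.Build (kerm f) (@km_addA R U V f) (@km_addC R U V f)
    (@km_add0 R U V f) (@km_addN R U V f).

Lemma km_scaleA (R : pzRingType) (U V : lmodType R) (f : {linear U -> V}) a b (v : kerm f) :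
  km_scale a (km_scale b v) = km_scale (a * b) v.
Proof. by apply: kerm_inj; rewrite /= scalerA. Qed.
Lemma km_scale1 (R : pzRingType) (U V : lmodType R) (f : {linear U -> V}) : left_id 1 (@km_scale R U V f).
Proof. by move=> v; apply: kerm_inj; rewrite /= scale1r. Qed.
Lemma km_scaleDr (R : pzRingType) (U V : lmodType R) (f : {linear U -> V}) : right_distributive (@km_scale R U V f) +%R.
Proof. by move=> a x y; apply: kerm_inj; rewrite /= scalerDr. Qed.
Lemma km_scaleDl (R : pzRingType) (U V : lmodType R) (f : {linear U -> V}) (v : kerm f) :
  {morph (@km_scale R U V f)^~ v : a b / a + b}.
Proof. by move=> a b; apply: kerm_inj; rewrite /= scalerDl. Qed.

HB.instance Definition _ (R : pzRingType) (U V : lmodType R) (f : {linear U -> V}) :=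
  GRing.Zmodule_isLmodule.Build R (kerm f) (@km_scaleA R U V f) (@km_scale1 R U V f)
    (@km_scaleDr R U V f) (@km_scaleDl R U V f).


Definition zero_then (R : pzRingType) (E Q E1 : lmodType R) (f : {linear Q -> E1})
  (p : (E * Q)%type) : E1 := f p.2.
Lemma zero_then_linear (R : pzRingType) (E Q E1 : lmodType R) (f : {linear Q -> E1}) :
  linear (@zero_then R E Q E1 f).
Proof. by move=> a [x y] [x' y']; rewrite /zero_then /= linearP. Qed.
HB.instance Definition _ (R : pzRingType) (E Q E1 : lmodType R) (f : {linear Q -> E1}) :=
  GRing.isLinear.Build R (E * Q)%type E1 _ (@zero_then R E Q E1 f)
    (@zero_then_linear R E Q E1 f).

Definition incl_ker (R : pzRingType) (E Q E1 : lmodType R) (f : {linear Q -> E1})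
  (p : (E * kerm f)%type) : (E * Q)%type := (p.1, proj1_sig p.2).

Definition is_ideal (R : comPzRingType) (I : R -> Prop) : Prop :=
  [/\ I 0, (forall a b, I a -> I b -> I (a + b)) & (forall r a, I a -> I (r * a))].

Definition fin_gen_ideal (R : comPzRingType) (I : R -> Prop) : Prop :=
  exists s : seq R, forall r, I r <-> exists c : 'I_(size s) -> R, r = \sum_(i < size s) c i * s`_i.

Definition colon (R : comPzRingType) (I : R -> Prop) (x : R) : R -> Prop := fun r => I (r * x).

Record filter_of_ideals (R : comPzRingType) (G : (R -> Prop) -> Prop) : Prop := {
  foi_ideal : forall I, G I -> is_ideal I;
  foi_nonempty : exists I, G I;
  foi_up : forall I J, G I -> is_ideal J -> (forall r, I r -> J r) -> G J;
  foi_cap : forall I J, G I -> G J -> G (fun r => I r /\ J r) }.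

Record gabriel_filter (R : comPzRingType) (G : (R -> Prop) -> Prop) : Prop := {
  gf_filter : filter_of_ideals G;
  gf_colon : forall I x, G I -> G (colon I x);
  gf_glue : forall J, is_ideal J ->
     (exists I, G I /\ forall x, I x -> G (colon J x)) -> G J }.

Definition finite_type (R : comPzRingType) (G : (R -> Prop) -> Prop) : Prop :=
  forall I, G I -> exists J, [/\ G J, fin_gen_ideal J & forall r, J r -> I r].

(* F_G = { M | Hom_R(R/I, M) = 0 for all I in G }.  A morphism R/I -> M
   is the same as an element of M annihilated by I (image of 1 + I).  *)
Definition F_G (R : comPzRingType) (G : (R -> Prop) -> Prop) (M : lmodType R) : Prop :=
  forall I, G I -> forall m : M, (forall r, I r -> r *: m = 0) -> m = 0.

Definition injective_module (R : comPzRingType) (N : lmodType R) : Prop :=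
  forall (A B : lmodType R) (i : {linear A -> B}) (g : {linear A -> N}),
    injective i -> exists h : {linear B -> N}, forall a, h (i a) = g a.

(* N is an injective envelope E(R/I): N is injective and contains an
   element x with ann(x) = I (so R x ~ R/I) such that R x is essential in N. *)
Definition inj_envelope_of_cyclic (R : comPzRingType) (I : R -> Prop) (N : lmodType R) : Prop :=
  injective_module N /\
  exists x : N, (forall r, r *: x = 0 <-> I r) /\
    (forall n : N, n != 0 -> exists r s : R, r *: n = s *: x /\ r *: n != 0).

Definition Cogen (R : comPzRingType) (C M : lmodType R) : Prop :=
  exists (X : Type) (i : {linear M -> dprodm (fun _ : X => C)}), injective i.

Definition precover (R : comPzRingType) (G : (R -> Prop) -> Prop) (Q X : lmodType R)
  (f : {linear Q -> X}) : Prop :=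
  F_G G Q /\ forall (P : lmodType R) (g : {linear P -> X}), F_G G P ->
    exists h : {linear P -> Q}, forall p, f (h p) = g p.

Definition C_lambda (R : comPzRingType) (E0 E1 : lmodType R) (lam : {linear E0 -> E1})
  (X : lmodType R) : Prop :=
  forall g : {linear X -> E1}, exists h : {linear X -> E0}, forall x, lam (h x) = g x.

Definition cosilting_wrt (R : comPzRingType) (C E0 E1 : lmodType R) (lam : {linear E0 -> E1})
  : Prop :=
  [/\ injective_module E0, injective_module E1,
      (exists i : {linear C -> E0}, injective i /\ forall e, lam e = 0 <-> exists c, i c = e)
    & forall X, Cogen C X <-> C_lambda lam X].

(* Precover.  Build [f : Q -> E1] so that every map from [E^E] to [E1] factors through it.
   Partial lifts of [g : P -> E1] along [f] defined on G-saturated submodules of [P] form an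
   inductive family, because G has a basis of finitely generated ideals.  A maximal one is
   total: if [p] lies outside its domain [N], then [P/N] is in [F_G], hence cogenerated by [E],
   which yields [w] in [E^E] with [ann w = (N : p)]; so [n + s p |-> s w] is well defined with
   kernel [N], and the defect of the lift on the saturation of [N + Rp] factors through [E^E]
   (as [E1] is injective) and then through [f].
   Cosilting.  [Cogen C = F_G] as [E] embeds in [C] and [C] lies in [F_G]; modules of [F_G]
   lift along [lam] because [f] is a precover; conversely, an element [m] of a module in
   [C_lambda] killed by some [I] in [G] is sent to a generator of [R/ann m] inside
   [E(R/ann m)], a factor of [E1], and the lift of that map lands in the [F_G]-module [Q],
   which forces [m = 0]. *)

From HB Require Import structures.
From mathcomp Require Import all_boot all_order all_algebra.
From mathcomp Require Import boolp.
From mathcomp Require classical_sets.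
From Stdlib Require Import Classical ClassicalEpsilon FunctionalExtensionality PropExtensionality.
Set Implicit Arguments. Unset Strict Implicit. Unset Printing Implicit Defensive.
Import GRing.Theory.
Local Open Scope ring_scope.

Definition linear_fun (R : pzRingType) (A B : lmodType R) (f : A -> B) of linear f : A -> B := f.
HB.instance Definition _ (R : pzRingType) (A B : lmodType R) (f : A -> B) (fL : linear f) :=
  GRing.isLinear.Build R A B _ (linear_fun fL) fL.
Definition mk_linear (R : pzRingType) (A B : lmodType R) (f : A -> B) (fL : linear f) :
  {linear A -> B} := linear_fun fL.

Section Submodule.
Variables (R : pzRingType) (M : lmodType R).

Definition submodule (V : M -> Prop) : Prop :=
  V 0 /\ forall a u v, V u -> V v -> V (a *: u + v).

Variables (V : M -> Prop) (hV : submodule V).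

Lemma submod0 : V 0. Proof. by case: hV. Qed.
Lemma submodP a u v : V u -> V v -> V (a *: u + v). Proof. by case: hV => _; apply. Qed.
Lemma submodD u v : V u -> V v -> V (u + v).
Proof. by rewrite -[u in u + v]scale1r; apply: submodP. Qed.
Lemma submodZ a u : V u -> V (a *: u).
Proof. by move=> Vu; rewrite -[_ *: _]addr0; apply: submodP Vu submod0. Qed.
Lemma submodN u : V u -> V (- u). Proof. by rewrite -scaleN1r; apply: submodZ. Qed.
Lemma submodB u v : V u -> V v -> V (u - v).
Proof. by move=> Vu Vv; apply: submodD Vu (submodN Vv). Qed.
End Submodule.

Lemma submodule_eq0 (R : pzRingType) (M : lmodType R) : submodule (fun x : M => x = 0).
Proof. by split => // a u v -> ->; rewrite scaler0 addr0. Qed.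

Section SubmodulePred.
Variables (R : pzRingType) (M : lmodType R) (V : M -> Prop) (hV : submodule V).

Definition submod_pred : pred M := fun x => `[< V x >].
Lemma submod_pred_closed : GRing.subsemimod_closed submod_pred.
Proof.
split; first split.
- exact/asboolP/(submod0 hV).
- by move=> u v /asboolP Vu /asboolP Vv; apply/asboolP/(submodD hV Vu Vv).
- by move=> a u /asboolP Vu; apply/asboolP/(submodZ hV a Vu).
Qed.
End SubmodulePred.

(* The proof [hV] does not occur in the body: it indexes the type, so that the module structure
   below can be inferred. *)
Definition submod_type (R : pzRingType) (M : lmodType R) (V : M -> Prop) (hV : submodule V) :
  Type := {x : M | submod_pred V x}.

Section SubmoduleType.
Variables (R : pzRingType) (M : lmodType R) (V : M -> Prop) (hV : submodule V).
HB.instance Definition _ := GRing.isSubmodClosed.Build R M (submod_pred V) (submod_pred_closed hV).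
HB.instance Definition _ := [isSub of submod_type hV for @sval M (submod_pred V)].
HB.instance Definition _ := [Choice of submod_type hV by <:].
HB.instance Definition _ := [SubChoice_isSubLmodule of submod_type hV by <:].
End SubmoduleType.

Definition dom (A B : Type) (Gam : A * B -> Prop) (x : A) : Prop := exists y, Gam (x, y).

Section GraphExtension.
Variables (R : comPzRingType) (B N : lmodType R) (Gam : B * N -> Prop).
Hypotheses (Gam_submod : submodule Gam) (Gam_fun : forall y, Gam (0, y) -> y = 0).

Lemma dom_submodule : submodule (dom Gam).
Proof.
split; first by exists 0; exact: (submod0 Gam_submod).
by move=> a u v [y Hy] [z Hz]; exists (a *: y + z); apply: (submodP Gam_submod _ Hy Hz).
Qed.

Lemma graph_functional x y z : Gam (x, y) -> Gam (x, z) -> y = z.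
Proof.
move=> Hy Hz; have := submodP Gam_submod (-1) Hy Hz.
rewrite scaleN1r addrC -[(x, z) - (x, y)]/(x - x, z - y) subrr => /Gam_fun /eqP.
by rewrite subr_eq0 => /eqP.
Qed.

Let graph_pick (x : B) : N := epsilon (inhabits 0) (fun y => Gam (x, y)).

Lemma graph_pickE x y : Gam (x, y) -> graph_pick x = y.
Proof.
move=> Hy; have := epsilon_spec (inhabits 0) (fun y => Gam (x, y)) (ex_intro _ y Hy).
by move=> H; apply: graph_functional H Hy.
Qed.

Lemma injective_module_extend :
  injective_module N -> exists h : {linear B -> N}, forall x y, Gam (x, y) -> h x = y.
Proof.
move=> hN; have pick_linear : linear (fun v : submod_type dom_submodule => graph_pick (val v)).
  move=> a u v /=; have /asboolP [y Hy] := valP u; have /asboolP [z Hz] := valP v.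
  rewrite (graph_pickE Hy) (graph_pickE Hz) -(graph_pickE (submodP Gam_submod a Hy Hz)).
  by congr graph_pick; rewrite [LHS]linearP.
have [h hE] := hN _ _ (val : {linear _ -> B}) (mk_linear pick_linear) val_inj.
exists h => x y Hxy; have dx : submod_pred (dom Gam) x by apply/asboolP; exists y.
by rewrite -[x]/(val (exist _ x dx : submod_type dom_submodule)) hE; exact: graph_pickE.
Qed.
End GraphExtension.

Section Quotient.
Variables (R : pzRingType) (M : lmodType R) (V : M -> Prop).

Definition coset_rep (x : M) : M := epsilon (inhabits 0) (fun y => V (x - y)).

Definition quotient_type of submodule V := {x : M | coset_rep x == x}.

Variable hV : submodule V.

Lemma coset_repP x : V (x - coset_rep x).
Proof.
apply: (epsilon_spec (inhabits 0) (fun y => V (x - y))).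
by exists x; rewrite subrr; apply: submod0 hV.
Qed.

Lemma coset_rep_eq x y : coset_rep x = coset_rep y <-> V (x - y).
Proof.
split => [Exy | Vxy].
  have -> : x - y = (x - coset_rep x) - (y - coset_rep y) by rewrite Exy opprB addrA subrK.
  exact: (submodB hV (coset_repP x) (coset_repP y)).
rewrite /coset_rep; congr epsilon; apply: functional_extensionality => z.
apply: propositional_extensionality; split => Vz.
- have -> : y - z = - (x - y) + (x - z) by rewrite opprB addrA subrK.
  exact: (submodD hV (submodN hV Vxy) Vz).
- have -> : x - z = (x - y) + (y - z) by rewrite addrA subrK.
  exact: (submodD hV Vxy Vz).
Qed.

Lemma coset_rep_idem x : coset_rep (coset_rep x) == coset_rep x.
Proof. by apply/eqP/coset_rep_eq; rewrite -opprB; exact: (submodN hV (coset_repP x)). Qed.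
End Quotient.

Section QuotientModule.
Variables (R : pzRingType) (M : lmodType R) (V : M -> Prop) (hV : submodule V).
Local Notation Mq := (quotient_type hV).

HB.instance Definition _ := [isSub of Mq for @sval M (fun x => coset_rep V x == x)].
HB.instance Definition _ := [Choice of Mq by <:].

Definition qproj (x : M) : Mq := exist _ (coset_rep V x) (coset_rep_idem hV x).

Lemma qproj_eq x y : qproj x = qproj y <-> V (x - y).
Proof.
rewrite -coset_rep_eq //; split => [/(congr1 val) //|Exy].
by apply: val_inj.
Qed.

Lemma qproj_val (a : Mq) : qproj (val a) = a.
Proof. by apply: val_inj; apply/eqP/(valP a). Qed.

Lemma quotient_ind (P : Mq -> Prop) : (forall x, P (qproj x)) -> forall a, P a.
Proof. by move=> Px a; rewrite -(qproj_val a). Qed.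

Lemma qproj_valK x : V (val (qproj x) - x).
Proof. by rewrite -opprB; exact: (submodN hV (coset_repP hV x)). Qed.

Definition quotient_add (a b : Mq) : Mq := qproj (val a + val b).
Definition quotient_opp (a : Mq) : Mq := qproj (- val a).
Definition quotient_scale r (a : Mq) : Mq := qproj (r *: val a).

Lemma quotient_addE x y : quotient_add (qproj x) (qproj y) = qproj (x + y).
Proof.
apply/qproj_eq; rewrite opprD addrACA.
exact: (submodD hV (qproj_valK x) (qproj_valK y)).
Qed.

Lemma quotient_oppE x : quotient_opp (qproj x) = qproj (- x).
Proof. by apply/qproj_eq; rewrite -opprD; exact: (submodN hV (qproj_valK x)). Qed.

Lemma quotient_scaleE r x : quotient_scale r (qproj x) = qproj (r *: x).
Proof. by apply/qproj_eq; rewrite -scalerBr; exact: (submodZ hV r (qproj_valK x)). Qed.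

Lemma quotient_addA : associative quotient_add.
Proof.
by elim/quotient_ind=> x; elim/quotient_ind=> y; elim/quotient_ind=> z;
  rewrite !quotient_addE addrA.
Qed.
Lemma quotient_addC : commutative quotient_add.
Proof. by elim/quotient_ind=> x; elim/quotient_ind=> y; rewrite !quotient_addE addrC. Qed.
Lemma quotient_add0 : left_id (qproj 0) quotient_add.
Proof. by elim/quotient_ind=> x; rewrite quotient_addE add0r. Qed.
Lemma quotient_addN : left_inverse (qproj 0) quotient_opp quotient_add.
Proof. by elim/quotient_ind=> x; rewrite quotient_oppE quotient_addE addNr. Qed.

HB.instance Definition _ :=
  GRing.isZmodule.Build Mq quotient_addA quotient_addC quotient_add0 quotient_addN.

Lemma quotient_scaleA a b (u : Mq) :
  quotient_scale a (quotient_scale b u) = quotient_scale (a * b) u.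
Proof. by elim/quotient_ind: u => x; rewrite !quotient_scaleE scalerA. Qed.
Lemma quotient_scale1 : left_id 1 quotient_scale.
Proof. by elim/quotient_ind=> x; rewrite quotient_scaleE scale1r. Qed.
Lemma quotient_scaleDr : right_distributive quotient_scale quotient_add.
Proof.
move=> a; elim/quotient_ind=> x; elim/quotient_ind=> y.
by rewrite !(quotient_addE, quotient_scaleE) scalerDr.
Qed.
Lemma quotient_scaleDl (u : Mq) : {morph quotient_scale^~ u : a b / a + b >-> quotient_add a b}.
Proof.
by elim/quotient_ind: u => x a b; rewrite !quotient_scaleE quotient_addE scalerDl.
Qed.

HB.instance Definition _ := GRing.Zmodule_isLmodule.Build R Mq
  quotient_scaleA quotient_scale1 quotient_scaleDr quotient_scaleDl.

Lemma qproj_linear : linear qproj.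
Proof.
move=> a x y; rewrite -[RHS]/(quotient_add (quotient_scale a (qproj x)) (qproj y)).
by rewrite quotient_scaleE quotient_addE.
Qed.

HB.instance Definition _ := GRing.isLinear.Build R M Mq _ qproj qproj_linear.

Lemma qproj_eq0 x : qproj x = 0 <-> V x.
Proof. by rewrite -[0]/(qproj 0) qproj_eq subr0. Qed.
End QuotientModule.

Notation power M X := (dprodm (fun _ : X => M)).

Section InjectiveModules.
Variable R : comPzRingType.

Lemma injective_module_dprod (I : Type) (M : I -> lmodType R) :
  (forall i, injective_module (M i)) -> injective_module (dprodm M).
Proof.
move=> injM A B i g inj_i.
have gL k : linear (fun a => g a k) by move=> a u v; rewrite linearP.
have ext k := injM k A B i (mk_linear (gL k)) inj_i.
pose h k := sval (cid (ext k)).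
have hL : linear (fun b => (fun k => h k b) : dprodm M).
  by move=> a u v; apply: functional_extensionality_dep => k; rewrite linearP.
exists (mk_linear hL) => a; apply: functional_extensionality_dep => k.
exact: (svalP (cid (ext k)) a).
Qed.

Lemma injective_module_pair (B C : lmodType R) :
  injective_module B -> injective_module C -> injective_module (B * C)%type.
Proof.
move=> injB injC A D i g inj_i.
have g1L : linear (fun a => (g a).1) by move=> a u v; rewrite linearP.
have g2L : linear (fun a => (g a).2) by move=> a u v; rewrite linearP.
have [h1 h1E] := injB A D i (mk_linear g1L) inj_i.
have [h2 h2E] := injC A D i (mk_linear g2L) inj_i.
have hL : linear (fun d => (h1 d, h2 d) : (B * C)%type) by move=> a u v; rewrite !linearP.
exists (mk_linear hL) => a; rewrite -[mk_linear hL _]/(h1 (i a), h2 (i a)) h1E h2E /=.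
exact: esym (surjective_pairing _).
Qed.
End InjectiveModules.

Section TorsionFree.
Variables (R : comPzRingType) (G : (R -> Prop) -> Prop).

Lemma F_G_inj (M N : lmodType R) (i : {linear M -> N}) : injective i -> F_G G N -> F_G G M.
Proof.
move=> inj_i FN I GI m Im; apply: inj_i; rewrite linear0; apply: (FN I GI) => r Ir.
by rewrite -linearZ_LR Im // linear0.
Qed.

Lemma F_G_dprod (I : Type) (M : I -> lmodType R) : (forall k, F_G G (M k)) -> F_G G (dprodm M).
Proof.
move=> FM J GJ m Jm; apply: functional_extensionality_dep => k.
by apply: (FM k J GJ) => r Jr; rewrite -[r *: m k]/((r *: m) k) Jm.
Qed.

Lemma F_G_pair (B C : lmodType R) : F_G G B -> F_G G C -> F_G G (B * C)%type.
Proof.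
move=> FB FC J GJ [b c] Jm; congr pair.
- by apply: (FB J GJ) => r /Jm [].
- by apply: (FC J GJ) => r /Jm [].
Qed.

Lemma F_G_kerm (U V : lmodType R) (f : {linear U -> V}) : F_G G U -> F_G G (kerm f).
Proof.
move=> FU J GJ m Jm; apply: kerm_inj; apply: (FU J GJ) => r Jr.
exact: (congr1 sval (Jm r Jr)).
Qed.

Lemma F_G_Cogen (C M : lmodType R) : F_G G C -> Cogen C M -> F_G G M.
Proof. by move=> FC [X [i inj_i]]; apply: F_G_inj inj_i _; apply: F_G_dprod. Qed.
End TorsionFree.

Section Cogeneration.
Variable R : comPzRingType.

Lemma Cogen_refl (M : lmodType R) : Cogen M M.
Proof.
have diagL : linear (fun m : M => (fun _ : unit => m) : power M unit).
  by move=> a u v; apply: functional_extensionality_dep.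
by exists unit, (mk_linear diagL) => x y /(congr1 (fun z : power M unit => z tt)).
Qed.

Lemma Cogen_inj (A B M : lmodType R) (j : {linear A -> B}) :
  injective j -> Cogen A M -> Cogen B M.
Proof.
move=> inj_j [X [i inj_i]].
have jiL : linear (fun m => (fun k => j (i m k)) : power B X).
  by move=> a u v; apply: functional_extensionality_dep => k; rewrite !linearP.
exists X, (mk_linear jiL) => x y /= Exy; apply: inj_i.
apply: functional_extensionality_dep => k; apply: inj_j.
exact: (congr1 (fun z : power B X => z k) Exy).
Qed.

Lemma Cogen_annihilator (E M : lmodType R) (m : M) : Cogen E M ->
  exists w : power E E, forall r, r *: w = 0 <-> r *: m = 0.
Proof.
move=> [X [j inj_j]].
(* [w] collects every [e] with [ann m <= ann e]; cogeneration gives the reverse inclusion. *)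
pose w : power E E := fun e => if `[< forall s, s *: m = 0 -> s *: e = 0 >] then e else 0.
exists w => r; split => [rw0 | rm0]; last first.
  apply: functional_extensionality_dep => e; rewrite -[(r *: w) e]/(r *: w e) /w.
  by case: asboolP => [Ae | _]; [exact: Ae | exact: scaler0].
apply: NNPP => rm_neq0.
have [k jk] : exists k, j (r *: m) k <> 0.
  apply: NNPP => none; apply: rm_neq0; apply: inj_j; rewrite linear0.
  apply: functional_extensionality_dep => k; apply: NNPP => jk.
  by apply: none; exists k.
set e := j m k.
have Ae : forall s, s *: m = 0 -> s *: e = 0.
  by move=> s sm0; rewrite -[s *: e]/((s *: j m) k) -linearZ_LR sm0 linear0.
apply: jk; rewrite linearZ_LR -[(r *: j m) k]/(r *: e).
have := congr1 (fun z : power E E => z e) rw0; rewrite -[(r *: w) e]/(r *: w e) /w.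
by case: asboolP.
Qed.
End Cogeneration.

Section Saturation.
Variables (R : comPzRingType) (G : (R -> Prop) -> Prop).

Definition saturated (M : lmodType R) (V : M -> Prop) : Prop :=
  forall I, G I -> forall x, (forall r, I r -> V (r *: x)) -> V x.

Definition saturation (M : lmodType R) (V : M -> Prop) (x : M) : Prop :=
  exists2 I, G I & forall r, I r -> V (r *: x).

Lemma F_G_quotient (M : lmodType R) (V : M -> Prop) (hV : submodule V) :
  saturated V -> F_G G (quotient_type hV).
Proof.
move=> satV I GI; elim/quotient_ind => x Ix; apply/qproj_eq0; apply: (satV I GI) => r Ir.
by apply/(qproj_eq0 hV); rewrite linearZ_LR; apply: Ix.
Qed.

Lemma colon_ideal (K : R -> Prop) r : is_ideal K -> is_ideal (colon K r).
Proof.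
case=> K0 KD KM; split; rewrite /colon.
- by rewrite mul0r.
- by move=> a b Ka Kb; rewrite mulrDl; apply: KD.
- by move=> c a Ka; rewrite -mulrA; apply: KM.
Qed.

Lemma ideal_of_submodule (M : lmodType R) (V : M -> Prop) (hV : submodule V) (x : M) :
  is_ideal (fun r => V (r *: x)).
Proof.
split; first by rewrite scale0r; exact: (submod0 hV).
  by move=> a b Va Vb; rewrite scalerDl; exact: (submodD hV Va Vb).
by move=> c a Va; rewrite -scalerA; exact: (submodZ hV c Va).
Qed.

Hypothesis hG : gabriel_filter G.

Lemma gabriel_full : G (fun _ => True).
Proof.
have [I GI] := foi_nonempty (gf_filter hG).
by apply: (foi_up (gf_filter hG) GI).
Qed.

Variables (M : lmodType R) (V : M -> Prop) (hV : submodule V).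

Lemma sub_saturation x : V x -> saturation V x.
Proof.
by move=> Vx; exists (fun _ => True) => [|r _]; [exact: gabriel_full | exact: (submodZ hV r Vx)].
Qed.

Lemma saturation_submodule : submodule (saturation V).
Proof.
split; first exact: (sub_saturation (submod0 hV)).
move=> a u v [I GI Iu] [J GJ Jv]; exists (fun r => I r /\ J r).
  exact: (foi_cap (gf_filter hG)).
move=> r [Ir Jr]; rewrite scalerDr scalerA mulrC -scalerA.
exact: (submodP hV a (Iu r Ir) (Jv r Jr)).
Qed.

Lemma saturation_saturated : saturated (saturation V).
Proof.
move=> I GI x Ix; have idK := ideal_of_submodule hV x.
exists (fun t => V (t *: x)) => //; apply: (gf_glue hG idK); exists I; split => // r Ir.
have [J GJ Jrx] := Ix r Ir.
apply: (foi_up (gf_filter hG) GJ (colon_ideal r idK)) => t Jt.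
by rewrite /colon -scalerA; apply: Jrx.
Qed.
End Saturation.

Lemma fin_gen_ideal_submodule (R : comPzRingType) (M : lmodType R) (V : M -> Prop)
    (hV : submodule V) (J : R -> Prop) (s : seq R) (x : M) :
  (forall r, J r <-> exists c : 'I_(size s) -> R, r = \sum_(i < size s) c i * s`_i) ->
  (forall i : 'I_(size s), V (s`_i *: x)) -> forall r, J r -> V (r *: x).
Proof.
move=> Js Vs r /Js [c ->]; rewrite scaler_suml.
apply: (big_ind V (submod0 hV) (submodD hV)) => i _.
by rewrite -scalerA; exact: (submodZ hV _ (Vs i)).
Qed.

Lemma fin_gen_ideal_gen (R : comPzRingType) (J : R -> Prop) (s : seq R) :
  (forall r, J r <-> exists c : 'I_(size s) -> R, r = \sum_(i < size s) c i * s`_i) ->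
  forall i : 'I_(size s), J s`_i.
Proof.
move=> Js i; apply/Js; exists (fun k => (k == i)%:R).
by rewrite (bigD1 i) //= eqxx mul1r big1 ?addr0 // => k /negbTE ->; rewrite mul0r.
Qed.

Lemma Zorn_nonempty_chains (T : Type) (P : (T -> Prop) -> Prop) (S0 : T -> Prop) (t0 : T) :
  P S0 -> S0 t0 ->
  (forall F : (T -> Prop) -> Prop, (forall X, F X -> P X) -> (exists X, F X) ->
     (forall X Y, F X -> F Y -> (forall t, X t -> Y t) \/ (forall t, Y t -> X t)) ->
     P (fun t => exists2 X, F X & X t)) ->
  exists2 A, P A & forall B, P B -> (forall t, A t -> B t) -> forall t, B t -> A t.
Proof.
move=> PS0 S0t0 Pchain.
(* [Zorn_bigcup] also bounds the empty chain: let the empty set in, maximality then excludes it. *)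
pose P' X := P X \/ forall t, ~ X t.
have [A [[PA | A0] Amax]] : exists A, P' A /\ forall B, classical_sets.proper A B -> ~ P' B.
  apply: classical_sets.Zorn_bigcup => F FP Ftot.
  case: (classic (exists X, F X /\ P X)) => [[X0 [FX0 PX0]] | noP]; [left | right]; last first.
    move=> t [X FX Xt]; case: (FP X FX) => [PX | X_empty]; last exact: X_empty t Xt.
    by apply: noP; exists X.
  suff -> : classical_sets.bigcup F id = (fun t => exists2 X, F X /\ P X & X t).
    apply: Pchain; [by move=> X [] | by exists X0 |].
    by move=> X Y [FX _] [FY _]; apply: Ftot.
  apply: functional_extensionality => t; apply: propositional_extensionality.
  split => [[X FX Xt] | [X [FX _] Xt]]; last by exists X.
  by case: (FP X FX) => [PX | X_empty]; [exists X | case: (X_empty t Xt)].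
- exists A => // B PB AB t Bt; apply: NNPP => nAt.
  by apply: (Amax B); [split => // BA; apply: nAt; apply: BA | left].
- by case: (Amax S0); [split => [t /A0 // | S0A]; exact: A0 _ (S0A _ S0t0) | left].
Qed.

Section AddLine.
Variables (R : comPzRingType) (M : lmodType R) (N : M -> Prop) (hN : submodule N) (p : M).

Definition add_line (x : M) : Prop := exists n s, N n /\ x = n + s *: p.

Lemma add_line_submodule : submodule add_line.
Proof.
split; first by exists 0, 0; rewrite scale0r addr0; split => //; exact: (submod0 hN).
move=> a u v [n1 [s1 [Nn1 ->]]] [n2 [s2 [Nn2 ->]]].
exists (a *: n1 + n2), (a * s1 + s2); split; first exact: (submodP hN a Nn1 Nn2).
by rewrite scalerDr scalerDl -scalerA addrACA.
Qed.

Lemma add_line_sub x : N x -> add_line x.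
Proof. by move=> Nx; exists x, 0; rewrite scale0r addr0. Qed.

Lemma add_line_point : add_line p.
Proof. by exists 0, 1; rewrite scale1r add0r; split => //; exact: (submod0 hN). Qed.
End AddLine.

Section Lifting.
Variables (R : comPzRingType) (G : (R -> Prop) -> Prop).
Hypotheses (hG : gabriel_filter G) (hfin : finite_type G).
Variables (Q T P : lmodType R) (f : {linear Q -> T}) (g : {linear P -> T}).

Definition lifting_graph (Gam : P * Q -> Prop) : Prop :=
  [/\ submodule Gam, forall q, Gam (0, q) -> q = 0,
      forall x q, Gam (x, q) -> f q = g x & saturated G (dom Gam)].

Section Chain.
Variable F : (P * Q -> Prop) -> Prop.
Hypotheses (F_lifting : forall Gam, F Gam -> lifting_graph Gam) (F_nonempty : exists Gam, F Gam).
Hypothesis F_total :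
  forall X Y, F X -> F Y -> (forall t, X t -> Y t) \/ (forall t, Y t -> X t).

Let Union t := exists2 Gam, F Gam & Gam t.

Lemma chain_upper2 X Y : F X -> F Y ->
  exists2 Z, F Z & (forall t, X t -> Z t) /\ (forall t, Y t -> Z t).
Proof. by move=> FX FY; case: (F_total FX FY) => sub; [exists Y | exists X]. Qed.

Lemma chain_dom_common n (y : nat -> P) : (forall i, (i < n)%N -> dom Union (y i)) ->
  exists2 Gam, F Gam & forall i, (i < n)%N -> dom Gam (y i).
Proof.
elim: n => [_ | n IH Uy]; first by have [Gam FGam] := F_nonempty; exists Gam.
have [X FX Xy] := IH (fun i lt_in => Uy i (ltnW lt_in)).
have [q [Y FY Yyn]] := Uy n (ltnSn n).
have [Z FZ [XZ YZ]] := chain_upper2 FX FY.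
exists Z => // i; rewrite ltnS leq_eqVlt => /orP[/eqP -> | lt_in].
  by exists q; apply: YZ.
by have [q' Xq'] := Xy i lt_in; exists q'; apply: XZ.
Qed.

Lemma lifting_graph_union : lifting_graph Union.
Proof.
split.
- split; first by have [Gam FGam] := F_nonempty; exists Gam; case: (F_lifting FGam) => /submod0.
  move=> a u v [X FX Xu] [Y FY Yv]; have [Z FZ [XZ YZ]] := chain_upper2 FX FY.
  by exists Z => //; case: (F_lifting FZ) => hZ _ _ _; exact: (submodP hZ a (XZ _ Xu) (YZ _ Yv)).
- by move=> q [Gam FGam]; case: (F_lifting FGam) => _ Gam_fun _ _; apply: Gam_fun.
- by move=> x q [Gam FGam]; case: (F_lifting FGam) => _ _ Gam_lift _; apply: Gam_lift.
move=> I GI x Ix; have [J [GJ [s Js] JI]] := hfin GI.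
have [Gam FGam Gam_s] := @chain_dom_common (size s) (fun i => s`_i *: x)
  (fun i lt_is => Ix _ (JI _ (fin_gen_ideal_gen Js (Ordinal lt_is)))).
case: (F_lifting FGam) => Gam_submod _ _ Gam_sat.
have [q Gq] : dom Gam x.
  apply: (Gam_sat J GJ); apply: (fin_gen_ideal_submodule (dom_submodule Gam_submod) Js).
  by move=> i; apply: Gam_s.
by exists q, Gam.
Qed.
End Chain.

Variable E : lmodType R.
Hypotheses (injE : injective_module E) (cogE : forall M, F_G G M -> Cogen E M).
Hypotheses (injQ : injective_module Q) (injT : injective_module T).
Hypothesis f_universal : forall c : {linear power E E -> T},
  exists j : {linear power E E -> Q}, forall w, f (j w) = c w.

Section Extension.
Variables (Gam : P * Q -> Prop) (p : P).
Hypotheses (Gam_submod : submodule Gam) (Gam_fun : forall q, Gam (0, q) -> q = 0).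
Hypotheses (Gam_lift : forall x q, Gam (x, q) -> f q = g x) (Gam_sat : saturated G (dom Gam)).

Let hN := dom_submodule Gam_submod.
Let S := saturation G (add_line (dom Gam) p).
Let hS : submodule S := saturation_submodule hG (add_line_submodule hN p).

Lemma exists_colon_witness : exists w : power E E, forall r, r *: w = 0 <-> dom Gam (r *: p).
Proof.
have [w annw] := Cogen_annihilator (qproj hN p) (cogE (F_G_quotient (hV := hN) Gam_sat)).
by exists w => r; rewrite annw -linearZ_LR; exact: qproj_eq0.
Qed.

Variables (w : power E E) (annw : forall r, r *: w = 0 <-> dom Gam (r *: p)).

Lemma exists_line_coordinate : exists iota : {linear P -> power E E},
  forall n s, dom Gam n -> iota (n + s *: p) = s *: w.
Proof.
pose Line (xy : P * power E E) := exists n s, dom Gam n /\ xy = (n + s *: p, s *: w).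
have Line_submod : submodule Line.
  split; first by exists 0, 0; rewrite !scale0r addr0; split => //; exact: (submod0 hN).
  move=> a _ _ [n1 [s1 [Nn1 ->]]] [n2 [s2 [Nn2 ->]]].
  exists (a *: n1 + n2), (a * s1 + s2); split; first exact: (submodP hN a Nn1 Nn2).
  rewrite -[LHS]/(a *: (n1 + s1 *: p) + (n2 + s2 *: p), a *: (s1 *: w) + s2 *: w).
  by rewrite scalerDr !scalerDl !scalerA addrACA.
have Line_fun y : Line (0, y) -> y = 0.
  case=> n [s [Nn [n_sp ->]]]; apply/annw.
  by rewrite -(addKr n (s *: p)) -n_sp addr0; exact: (submodN hN Nn).
have [iota iotaE] :=
  injective_module_extend Line_submod Line_fun (injective_module_dprod (fun _ => injE)).
by exists iota => n s Nn; apply: iotaE; exists n, s.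
Qed.

Variable iota : {linear P -> power E E}.
Hypothesis iotaE : forall n s, dom Gam n -> iota (n + s *: p) = s *: w.

Lemma line_coordinate_kernel x : S x -> iota x = 0 -> dom Gam x.
Proof.
move=> [I GI Ix] iota_x0; apply: (Gam_sat GI) => r Ir.
have [n [s [Nn rx]]] := Ix r Ir.
have /annw Nsp : s *: w = 0 by rewrite -(iotaE s Nn) -rx linearZ_LR iota_x0 scaler0.
by rewrite rx; exact: (submodD hN Nn Nsp).
Qed.

Variable h : {linear P -> Q}.
Hypothesis hE : forall x q, Gam (x, q) -> h x = q.

Lemma exists_defect_map : exists chi : {linear power E E -> T},
  forall x, S x -> chi (iota x) = g x - f (h x).
Proof.
pose Defect (yt : power E E * T) := exists2 x, S x & yt = (iota x, g x - f (h x)).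
have Defect_submod : submodule Defect.
  split; first by exists 0; [exact: (submod0 hS) | rewrite !linear0 addr0].
  move=> a _ _ [x Sx ->] [y Sy ->]; exists (a *: x + y); first exact: (submodP hS a Sx Sy).
  rewrite -[LHS]/(a *: iota x + iota y, a *: (g x - f (h x)) + (g y - f (h y))).
  by rewrite (linearP iota) (linearP g) (linearP h) (linearP f) scalerBr opprD addrACA.
have Defect_fun t : Defect (0, t) -> t = 0.
  case=> x Sx [/esym iota_x0 ->]; have [q Gq] := line_coordinate_kernel Sx iota_x0.
  by rewrite (hE Gq) (Gam_lift Gq) subrr.
have [chi chiE] := injective_module_extend Defect_submod Defect_fun injT.
by exists chi => x Sx; apply: chiE; exists x.
Qed.
End Extension.

Lemma lifting_graph_extend (Gam : P * Q -> Prop) (p : P) : lifting_graph Gam ->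
  exists2 Gam', lifting_graph Gam' & (forall t, Gam t -> Gam' t) /\ dom Gam' p.
Proof.
case=> Gam_submod Gam_fun Gam_lift Gam_sat.
have hL := add_line_submodule (dom_submodule Gam_submod) p.
pose S := saturation G (add_line (dom Gam) p).
have hS : submodule S := saturation_submodule hG hL.
have [w annw] := exists_colon_witness p Gam_submod Gam_sat.
have [iota iotaE] := exists_line_coordinate Gam_submod annw.
have [h hE] := injective_module_extend Gam_submod Gam_fun injQ.
have [chi chiE] := exists_defect_map Gam_submod Gam_lift Gam_sat annw iotaE hE.
have [j jE] := f_universal chi.
exists (fun xq => S xq.1 /\ xq.2 = h xq.1 + j (iota xq.1)); last split.
- split.
  + split; first by split; [exact: (submod0 hS) | rewrite !linear0 addr0].
    move=> a [x q] [y q'] [/= Sx ->] [/= Sy ->]; split; first exact: (submodP hS a Sx Sy).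
    by rewrite /= (linearP h) (linearP iota) (linearP j) scalerDr addrACA.
  + by move=> q [_ /= ->]; rewrite !linear0 addr0.
  + by move=> x q [/= Sx ->]; rewrite linearD jE chiE // addrC subrK.
  + move=> I GI x Ix; exists (h x + j (iota x)); split => //=.
    by apply: (saturation_saturated hG hL GI) => r /Ix [q []].
- move=> [x q] Gxq; have Nx : dom Gam x by exists q.
  have iota_x0 : iota x = 0 by have := iotaE x 0 Nx; rewrite !scale0r addr0.
  split; first exact: (sub_saturation hG hL (add_line_sub p Nx)).
  by rewrite /= iota_x0 linear0 addr0 (hE _ _ Gxq).
- exists (h p + j (iota p)); split => //=.
  exact: (sub_saturation hG hL (add_line_point (dom_submodule Gam_submod) p)).
Qed.

Lemma lift_along (hP : F_G G P) : exists h : {linear P -> Q}, forall x, f (h x) = g x.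
Proof.
have zero_lifting : lifting_graph (fun xq => xq = 0).
  split; first exact: submodule_eq0.
  - by move=> q [].
  - by move=> x q [-> ->]; rewrite !linear0.
  move=> I GI x Ix; exists 0; congr pair; apply: (hP I GI) => r /Ix [q []] //.
have [A A_lifting A_max] :=
  Zorn_nonempty_chains zero_lifting (erefl 0) (@lifting_graph_union).
case: (A_lifting) => A_submod A_fun A_lift _.
have [h hA] := injective_module_extend A_submod A_fun injQ.
exists h => x; have [A' A'_lifting [AA' [q A'xq]]] := lifting_graph_extend x A_lifting.
by have Axq := A_max A' A'_lifting AA' _ A'xq; rewrite (hA _ _ Axq) (A_lift _ _ Axq).
Qed.
End Lifting.

Definition with_classic_eq (T : Type) : Type := T.
HB.instance Definition _ (T : Type) := hasDecEq.Build (with_classic_eq T) (@cl_eqP T).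

Lemma big_uniq_support (I : eqType) (V : nmodType) (F : I -> V) (s1 s2 : seq I) :
  uniq s1 -> uniq s2 -> (forall i, i \notin s1 -> F i = 0) ->
  (forall i, i \notin s2 -> F i = 0) -> \sum_(i <- s1) F i = \sum_(i <- s2) F i.
Proof.
move=> u1 u2 F1 F2.
have restrict (s s' : seq I) : (forall i, i \notin s' -> F i = 0) ->
    \sum_(i <- s) F i = \sum_(i <- [seq i <- s | i \in s']) F i.
  move=> Fs'; rewrite big_filter [RHS]big_mkcond; apply: eq_bigr => i _.
  by case: ifP => // /negbT /Fs'.
rewrite (restrict s1 s2) // (restrict s2 s1) //; apply: perm_big; apply: uniq_perm.
- exact: filter_uniq.
- exact: filter_uniq.
by move=> i; rewrite !mem_filter andbC.
Qed.

Section UniversalMap.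
Variables (R : comPzRingType) (W T : lmodType R).
Local Notation Idx := (with_classic_eq {linear W -> T}).

(* The map [f] extends the summation map from the direct sum [W^(Idx)] to the product. *)
Lemma exists_universal_map : injective_module T ->
  exists f : {linear power W Idx -> T}, forall c : {linear W -> T},
    exists j : {linear W -> power W Idx}, forall w, f (j w) = c w.
Proof.
move=> injT.
pose Sum (qt : power W Idx * T) := exists2 s : seq Idx,
  uniq s /\ (forall z, z \notin s -> qt.1 z = 0) &
  qt.2 = \sum_(z <- s) (z : {linear W -> T}) (qt.1 z).
have Sum_submod : submodule Sum.
  split; first by exists [::]; rewrite ?big_nil.
  move=> a [q1 t1] [q2 t2] [s1 [u1 q1s1] /= ->] [s2 [u2 q2s2] /= ->].
  pose s := undup (s1 ++ s2).
  have [q1s q2s] : (forall z, z \notin s -> q1 z = 0) /\ (forall z, z \notin s -> q2 z = 0).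
    by split => z; rewrite mem_undup mem_cat negb_or => /andP[/q1s1 ? /q2s2 ?].
  have vanish (q : power W Idx) (s' : seq Idx) : (forall z, z \notin s' -> q z = 0) ->
      forall z : Idx, z \notin s' -> (z : {linear W -> T}) (q z) = 0.
    by move=> qs' z /qs' ->; rewrite linear0.
  exists s => /=.
    split => [|z zs]; first exact: undup_uniq.
    by rewrite -[LHS]/(a *: q1 z + q2 z) q1s // q2s // scaler0 addr0.
  rewrite (big_uniq_support u1 (undup_uniq _) (vanish _ _ q1s1) (vanish _ _ q1s)).
  rewrite (big_uniq_support u2 (undup_uniq _) (vanish _ _ q2s2) (vanish _ _ q2s)).
  by rewrite scaler_sumr -big_split; apply: eq_bigr => z _; rewrite linearP.
have Sum_fun t : Sum (0, t) -> t = 0.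
  by case=> s _ /= ->; rewrite big1 // => z _; rewrite -[(0 : power W Idx) z]/0 linear0.
have [f fE] := injective_module_extend Sum_submod Sum_fun injT.
exists f => c; pose single (w : W) : power W Idx := fun z => if z == c :> Idx then w else 0.
have singleL : linear single.
  move=> a u v; apply: functional_extensionality_dep => z.
  rewrite -[RHS]/(a *: single u z + single v z) /single.
  by case: (z == c :> Idx); rewrite ?scaler0 ?addr0.
exists (mk_linear singleL) => w; apply: fE; exists [:: c : Idx].
  split => // z; rewrite inE => /negbTE zc.
  by rewrite -[LHS]/(if z == c :> Idx then w else 0) zc.
by rewrite big_seq1 -[_ (_ c)]/(c (if c == c :> Idx then w else 0)) eqxx.
Qed.
End UniversalMap.

Section KernelInclusion.
Variables (R : comPzRingType) (E Q E1 : lmodType R) (f : {linear Q -> E1}).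

Lemma incl_ker_linear : linear (@incl_ker R E Q E1 f).
Proof. by move=> a [x k] [y l]. Qed.

Lemma incl_ker_injective : injective (@incl_ker R E Q E1 f).
Proof. by move=> [a k] [b l] [-> kl]; congr pair; apply: kerm_inj. Qed.

Lemma zero_then_ker (e : E * Q) :
  @zero_then R E Q E1 f e = 0 <-> exists c : E * kerm f, incl_ker c = e.
Proof.
case: e => a q; split => [fq0 | [[b [k fk0]] [_ <-]]]; last exact/eqP.
have fq0' : f q == 0 by apply/eqP.
by exists (a, exist _ q fq0').
Qed.

Lemma Cogen_pair_kerm (G : (R -> Prop) -> Prop) : F_G G E -> F_G G Q ->
  (forall M, F_G G M -> Cogen E M) -> forall M, Cogen (E * kerm f)%type M <-> F_G G M.
Proof.
move=> FE FQ cogE M; split; first exact: F_G_Cogen (F_G_pair FE (F_G_kerm (f := f) FQ)).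
have inlL : linear (fun e : E => (e, 0) : (E * kerm f)%type).
  by move=> a x y; congr pair; rewrite /= scaler0 addr0.
by move/cogE; apply: (Cogen_inj (j := mk_linear inlL)) => x y [].
Qed.

Lemma precover_C_lambda (G : (R -> Prop) -> Prop) (X : lmodType R) :
  precover G f -> F_G G X -> C_lambda (@zero_then R E Q E1 f : {linear (E * Q)%type -> E1}) X.
Proof.
move=> [_ f_precover] FX g; have [h hE] := f_precover X g FX.
have L : linear (fun x : X => (0, h x) : (E * Q)%type).
  by move=> a x y; rewrite linearP; congr pair; rewrite /= scaler0 addr0.
by exists (mk_linear L) => x; apply: hE.
Qed.
End KernelInclusion.

Section CosiltingClass.
Variables (R : comPzRingType) (G : (R -> Prop) -> Prop).
Hypotheses (hG : gabriel_filter G) (hfin : finite_type G).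

Lemma exists_injective_precover (E E1 : lmodType R) :
  injective_module E -> (forall M, F_G G M -> Cogen E M) -> F_G G E -> injective_module E1 ->
  exists (Q : lmodType R) (f : {linear Q -> E1}), injective_module Q /\ precover G f.
Proof.
move=> injE cogE FE injE1; have [f f_universal] := exists_universal_map (power E E) injE1.
have injQ : injective_module (power (power E E) (with_classic_eq {linear power E E -> E1})).
  by do 2 apply: injective_module_dprod => _.
exists _, f; split => //; split; first by do 2 apply: F_G_dprod => _.
by move=> P g FP; apply: (lift_along hG hfin g injE cogE injQ injE1 f_universal FP).
Qed.

Variables (env : forall I : {I : R -> Prop | G I}, lmodType R)
  (henv : forall I, inj_envelope_of_cyclic (proj1_sig I) (env I)).

Lemma C_lambda_F_G (E Q X : lmodType R) (f : {linear Q -> dprodm env}) : F_G G Q ->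
  C_lambda (@zero_then R E Q (dprodm env) f : {linear (E * Q)%type -> dprodm env}) X ->
  F_G G X.
Proof.
move=> FQ f_lifts I GI m Im; pose J r := r *: m = 0.
have GJ : G J := foi_up (gf_filter hG) GI (ideal_of_submodule (submodule_eq0 X) m) Im.
pose z := exist G J GJ : {I | G I}; have [_ [x [annx _]]] := henv z.
pose e0 : dprodm env := @dfwith (with_classic_eq {I | G I}) (fun k => env k) (fun k => 0) z x.
have ann_e0 r : J r -> r *: e0 = 0.
  move=> Jr; apply: functional_extensionality_dep => k; rewrite -[(r *: e0) k]/(r *: e0 k).
  have [<- | zk] := eqVneq (z : with_classic_eq {I | G I}) k.
    by rewrite /e0 dfwith_in; apply/annx.
  by rewrite /e0 dfwith_out // scaler0.
pose Gam (me : X * dprodm env) := exists r, me = (r *: m, r *: e0).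
have Gam_submod : submodule Gam.
  split; first by exists 0; rewrite !scale0r.
  move=> a _ _ [r1 ->] [r2 ->]; exists (a * r1 + r2).
  rewrite -[LHS]/(a *: (r1 *: m) + r2 *: m, a *: (r1 *: e0) + r2 *: e0).
  by rewrite !scalerDl !scalerA.
have Gam_fun e : Gam (0, e) -> e = 0 by case=> r [/esym/ann_e0 r_e0 ->].
have [phi phiE] := injective_module_extend Gam_submod Gam_fun
  (injective_module_dprod (fun k => (henv k).1)).
have [h hE] := f_lifts phi.
have h2 : (h m).2 = 0.
  apply: (FQ I GI) => r Ir; rewrite -[r *: _]/((r *: h m).2).
  by rewrite -linearZ_LR Im // linear0.
have e00 : e0 = 0.
  rewrite -(phiE m e0); last by exists 1; rewrite !scale1r.
  by rewrite -hE -[LHS]/(f (h m).2) h2 linear0.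
have x0 : x = 0 by have := congr1 (fun e : dprodm env => e z) e00; rewrite /e0 dfwith_in.
have : J 1 by apply/annx; rewrite x0 scaler0.
by rewrite /J scale1r.
Qed.
End CosiltingClass.

Theorem mainTheorem16 (R : comPzRingType) (G : (R -> Prop) -> Prop)
  (hG : gabriel_filter G) (hfin : finite_type G)
  (E : lmodType R) (hE : injective_module E) (hcogE : forall M, Cogen E M <-> F_G G M)
  (env : forall I : {I : R -> Prop | G I}, lmodType R)
  (henv : forall I, inj_envelope_of_cyclic (proj1_sig I) (env I)) :
  let E1 : lmodType R := dprodm env in
  (exists (Q : lmodType R) (f : {linear Q -> E1}), injective_module Q /\ precover G f)
  /\
  (forall (Q : lmodType R) (f : {linear Q -> E1}),
     injective_module Q -> precover G f ->
     let E0 : lmodType R := (E * Q)%type in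
     let lam : {linear E0 -> E1} := @zero_then R E Q E1 f in
     let C : lmodType R := (E * kerm f)%type in
     [/\ injective (@incl_ker R E Q E1 f),
         (forall e0 : E0, lam e0 = 0 <-> exists c : C, @incl_ker R E Q E1 f c = e0),
         cosilting_wrt C lam
       & forall M, Cogen C M <-> F_G G M]).
Proof.
move=> E1; have cogE M : F_G G M -> Cogen E M by move/hcogE.
have FE : F_G G E by apply/hcogE/Cogen_refl.
have injE1 : injective_module E1 by apply: injective_module_dprod => I; case: (henv I).
split; first exact: (exists_injective_precover hG hfin hE cogE FE injE1).
move=> Q f injQ [FQ f_precover] E0 lam C.
have cogC := Cogen_pair_kerm f FE FQ cogE.
split; [exact: incl_ker_injective | exact: zero_then_ker | | exact: cogC].
split; [exact: injective_module_pair | exact: injE1 | |].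
- exists (mk_linear (incl_ker_linear (E := E) (f := f))).
  by split; [exact: incl_ker_injective | exact: zero_then_ker].
- move=> X; rewrite cogC; split; first exact: precover_C_lambda.
  exact: (C_lambda_F_G hG henv FQ).
Qed.
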